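(* Let $\gamma\in\{0\}\cup(0,\infty)\cup\{\infty\}$. The following three problems are equivalent (in particular, their optimal values coincide): 1) The max-flow problem $\sup\ \sum_{x\in V}p_s(x)+\sum_{i=1}^n(\rho_i^1S_i^\ell-\rho_i^2S_i^u)$ over $p_s,p_i:V\to\mathbb{R}$, $q_i:V\times V\to\mathbb{R}$, $\rho_i^1,\rho_i^2$, subject to, for all $i\in I$: $|q_i(x,y)|\le1$ for all $(x,y)$ with $\{x,y\}\in E$; $p_i(x)\le C_i(x)$ for all $x$; $(\mathrm{div}_wq_i)(x)-p_s(x)+p_i(x)=\rho_i^1-\rho_i^2$ for all $x$; $0\le\rho_i^1,\rho_i^2\le\gamma$. 2) The primal-dual problem $$\min_{u:V\to\mathbb{R}^n}\ \sup_{p_s,p,q,\rho^1,\rho^2}\ \sum_{x\in V}p_s(x)+\sum_{i=1}^n(\rho_i^1S_i^\ell-\rho_i^2S_i^u)+\sum_{i=1}^n\sum_{x\in V}u_i(x)\big((\mathrm{div}_wq_i)(x)-p_s(x)+p_i(x)+\rho_i^2-\rho_i^1\big),$$ where the supremum is subject to $|q_i(x,y)|\le1$ for $\{x,y\}\in E$, $p_i(x)\le C_i(x)$ for all $x$, and $0\le\rho_i^1,\rho_i^2\le\gamma$, and $u$ is unconstrained. 3) The convex relaxed problem $\min_{u\in\mathcal{B}'}\sum_{i=1}^n\sum_{x\in V}C_i(x)u_i(x)+\sum_{i=1}^nTV_w(u_i)$ subject to the size constraints $S_i^\ell\le\|u_i\|\le S_i^u$ for all $i$ if $\gamma=\infty$,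 with the size penalty $\sum_{i=1}^nP_\gamma(\|u_i\|)$ added to the energy if $0<\gamma<\infty$, and with no size constraints if $\gamma=0$.
   Context: Let $G=(V,E)$ be a finite undirected graph with symmetric weights $w(x,y)=w(y,x)>0$ for $\{x,y\}\in E$ and $w(x,y)=0$ otherwise. $TV_w(v)=\frac12\sum_{x,y\in V}w(x,y)|v(y)-v(x)|$ for $v:V\to\mathbb{R}$. For $\phi:V\times V\to\mathbb{R}$, $(\mathrm{div}_w\phi)(x)=\frac12\sum_{y\in V}w(x,y)(\phi(x,y)-\phi(y,x))$. Let $n\ge2$, $I=\{1,\dots,n\}$, $C_i:V\to\mathbb{R}$ given; $\|u_i\|=\sum_xu_i(x)$; $\mathcal{B}'=\{u:V\to[0,1]^n:\sum_iu_i(x)=1\ \forall x\}$. Size bounds are integers $0\le S_i^\ell\le S_i^u$ with $\sum_iS_i^\ell\le|V|\le\sum_iS_i^u$; for $0<\gamma<\infty$, $P_\gamma(t)=0$ if $S_i^\ell\le t\le S_i^u$, $\gamma(t-S_i^u)$ if $t>S_i^u$, $\gamma(S_i^\ell-t)$ if $t<S_i^\ell$. For $\gamma=\infty$, $[0,\gamma]$ means $[0,\infty)$. *)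

From HB Require Import structures.
From mathcomp Require Import all_boot all_order all_algebra.
From mathcomp Require Import all_classical all_reals.
From mathcomp Require Import ereal.
Set Implicit Arguments. Unset Strict Implicit. Unset Printing Implicit Defensive.
Import Order.TTheory GRing.Theory Num.Theory.
Local Open Scope ring_scope.

Section Graph.
Variables (R : realType) (V : finType) (n : nat).
Variable (w : V -> V -> R).

Definition TVw (v : V -> R) : R :=
  2^-1 * \sum_(x : V) \sum_(y : V) w x y * `|v y - v x|.

Definition divw (phi : V -> V -> R) (x : V) : R :=
  2^-1 * \sum_(y : V) w x y * (phi x y - phi y x).

Definition unorm (v : V -> R) : R := \sum_(x : V) v x.

Definition inBprime (u : 'I_n -> V -> R) : Prop :=
  (forall i x, 0 <= u i x <= 1) /\ (forall x, \sum_(i < n) u i x = 1).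

Definition Pgam (g : R) (Sl Su : nat) (t : R) : R :=
  if t > Su%:R then g * (t - Su%:R)
  else if t < Sl%:R then g * (Sl%:R - t) else 0.

Variables (e : rel V) (C : 'I_n -> V -> R) (Sl Su : 'I_n -> nat).

Definition rho_ok (gamma : \bar R) (r : R) : Prop := 0 <= r /\ (r%:E <= gamma)%E.

Definition dual_box (gamma : \bar R) (p : 'I_n -> V -> R)
  (q : 'I_n -> V -> V -> R) (r1 r2 : 'I_n -> R) : Prop :=
  forall i, (forall x y, e x y -> `|q i x y| <= 1) /\
            (forall x, p i x <= C i x) /\ rho_ok gamma (r1 i) /\ rho_ok gamma (r2 i).

Definition flow_obj (ps : V -> R) (r1 r2 : 'I_n -> R) : R :=
  \sum_(x : V) ps x + \sum_(i < n) (r1 i * (Sl i)%:R - r2 i * (Su i)%:R).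

Definition maxflow_value (gamma : \bar R) : \bar R :=
  ereal_sup [set z : \bar R | exists (ps : V -> R) (p : 'I_n -> V -> R)
    (q : 'I_n -> V -> V -> R) (r1 r2 : 'I_n -> R),
    [/\ dual_box gamma p q r1 r2,
        (forall i x, divw (q i) x - ps x + p i x = r1 i - r2 i) &
        z = (flow_obj ps r1 r2)%:E]].

Definition lagrangian (u : 'I_n -> V -> R) (ps : V -> R) (p : 'I_n -> V -> R)
  (q : 'I_n -> V -> V -> R) (r1 r2 : 'I_n -> R) : R :=
  flow_obj ps r1 r2 +
  \sum_(i < n) \sum_(x : V) u i x * (divw (q i) x - ps x + p i x + r2 i - r1 i).

Definition pd_inner (gamma : \bar R) (u : 'I_n -> V -> R) : \bar R :=
  ereal_sup [set z : \bar R | exists (ps : V -> R) (p : 'I_n -> V -> R)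
    (q : 'I_n -> V -> V -> R) (r1 r2 : 'I_n -> R),
    dual_box gamma p q r1 r2 /\ z = (lagrangian u ps p q r1 r2)%:E].

Definition primaldual_value (gamma : \bar R) : \bar R :=
  ereal_inf [set pd_inner gamma u | u in [set: 'I_n -> V -> R]].

Definition relaxed_energy (u : 'I_n -> V -> R) : R :=
  \sum_(i < n) \sum_(x : V) C i x * u i x + \sum_(i < n) TVw (u i).

Definition size_ok (u : 'I_n -> V -> R) : Prop :=
  forall i, (Sl i)%:R <= unorm (u i) <= (Su i)%:R.

Definition relaxed_obj (gamma : \bar R) (u : 'I_n -> V -> R) : \bar R :=
  match gamma with
  | EFin g => if 0 < g then (relaxed_energy u +
                  \sum_(i < n) Pgam g (Sl i) (Su i) (unorm (u i)))%:E
              else (relaxed_energy u)%:E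
  | _ => (relaxed_energy u)%:E
  end.

Definition relaxed_feasible (gamma : \bar R) (u : 'I_n -> V -> R) : Prop :=
  inBprime u /\ (gamma = +oo%E -> size_ok u).

Definition relaxed_value (gamma : \bar R) : \bar R :=
  ereal_inf [set relaxed_obj gamma u | u in relaxed_feasible gamma].
End Graph.

From HB Require Import structures.
From mathcomp Require Import all_boot all_order all_algebra.
From mathcomp Require Import all_classical all_reals.
From mathcomp Require Import ereal.
From mathcomp Require Import lra ring.
Set Implicit Arguments. Unset Strict Implicit. Unset Printing Implicit Defensive.
Import Order.TTheory GRing.Theory Num.Theory.
Local Open Scope ring_scope.

(* Weak duality: for [u] in [B'] (satisfying the size constraints when
   [gamma = +oo]) and multipliers [(ps, p, q, rho1, rho2)] in the box, the
   Lagrangian is at most the relaxed objective of [u]: [ps] cancels because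
   [sum_i u_i = 1], summation by parts and [|q| <= 1] give
   [sum_x u div q <= TV(u)], [p <= C], and the [rho] terms are bounded by the
   size penalty. On flows obeying the conservation law the Lagrangian is the
   flow value, so max-flow <= primal-dual <= relaxed.
   Strong duality: max-flow is a finite linear program, bounded by weak duality.
   The affine Farkas lemma (Motzkin's transposition theorem, by Fourier-Motzkin
   elimination) gives nonnegative multipliers of its constraints that combine to
   the objective with total bound at most the max-flow value. The multipliers of
   the two conservation inequalities at [(i, x)] define a labelling [u] in [B'],
   and the remaining multipliers bound its data term, total variation and size
   penalty, so [u] attains the max-flow value in all three problems. *)

Section BigIndicator.
Variables (R : comPzRingType) (K : finType).

Lemma sum_mul_indicator (F : K -> R) k0 : \sum_k F k * (k == k0)%:R = F k0.
Proof.
rewrite (bigD1 k0) //= eqxx mulr1 big1 ?addr0 // => k /negbTE ->.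
by rewrite mulr0.
Qed.

Lemma sum_indicator_mul (F : K -> R) k0 : \sum_k (k == k0)%:R * F k = F k0.
Proof.
rewrite (bigD1 k0) //= eqxx mul1r big1 ?addr0 // => k /negbTE ->.
by rewrite mul0r.
Qed.

Lemma sum_indicator2_mul (F : K -> R) (alpha beta : R) p q :
  \sum_k (alpha * (k == p)%:R + beta * (k == q)%:R) * F k = alpha * F p + beta * F q.
Proof.
rewrite -(sum_indicator_mul (fun k => alpha * F k) p).
rewrite -(sum_indicator_mul (fun k => beta * F k) q) -big_split /=.
by apply: eq_bigr => k _; ring.
Qed.

Lemma sum_indicator (k0 : K) : \sum_k (k == k0)%:R = 1 :> R.
Proof. by rewrite (bigD1 k0) //= eqxx big1 ?addr0 // => k /negbTE ->. Qed.

End BigIndicator.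

Section BigPair.
Variables (R : comPzRingType) (K K' : finType).

Lemma sum_pair (F : K * K' -> R) :
  \sum_kk F kk = \sum_k \sum_k' F (k, k').
Proof. by rewrite pair_bigA; apply: eq_bigr => -[]. Qed.

Lemma sum_pair_mul_indicator (F : K -> K' -> R) k0 k0' :
  \sum_k \sum_k' F k k' * ((k, k') == (k0, k0'))%:R = F k0 k0'.
Proof. by rewrite -[RHS](sum_mul_indicator (fun kk => F kk.1 kk.2) (k0, k0')) sum_pair. Qed.

End BigPair.

Lemma ler_term_sum (R : numDomainType) (K : finType) (F : K -> R) k0 :
  (forall k, 0 <= F k) -> F k0 <= \sum_k F k.
Proof. by move=> F_ge0; rewrite (bigD1 k0) //= lerDl sumr_ge0. Qed.

Section LinearForms.
Variables (R : realFieldType) (J : finType).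

Definition linear_form (l : (J -> R) -> R) :=
  forall a x y, l (fun j => a * x j + y j) = a * l x + l y.

Definition depends_only_on (S : {set J}) (l : (J -> R) -> R) :=
  forall x x', {in S, x =1 x'} -> l x = l x'.

Definition unit_vector (j0 : J) : J -> R := fun j => (j == j0)%:R.

Definition update (x : J -> R) (j0 : J) (t : R) : J -> R :=
  fun j => if j == j0 then t else x j.

Lemma linear_form0 l : linear_form l -> l (fun=> 0) = 0.
Proof.
move=> l_lin; have := l_lin (-1) (fun=> 0) (fun=> 0).
by rewrite !mulN1r !addNr => l0; exact: l0.
Qed.

Lemma linear_form_update l x j0 t : linear_form l ->
  l (update x j0 t) = l x + l (unit_vector j0) * (t - x j0).
Proof.
move=> l_lin.
have -> : update x j0 t = (fun j => (t - x j0) * unit_vector j0 j + x j).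
  apply: funext => j; rewrite /update /unit_vector; case: eqP => [->|_].
    by rewrite mulr1 subrK.
  by rewrite mulr0 add0r.
by rewrite l_lin addrC mulrC.
Qed.

Lemma linear_form_proj j : linear_form (fun x => x j).
Proof. by []. Qed.

Lemma linear_formZ (c : R) l : linear_form l -> linear_form (fun x => c * l x).
Proof. by move=> l_lin a x y; rewrite l_lin mulrDr mulrCA. Qed.

Lemma linear_formD l l' :
  linear_form l -> linear_form l' -> linear_form (fun x => l x + l' x).
Proof. by move=> l_lin l'_lin a x y; rewrite l_lin l'_lin mulrDr; ring. Qed.

Lemma linear_formB l l' :
  linear_form l -> linear_form l' -> linear_form (fun x => l x - l' x).
Proof. by move=> l_lin l'_lin a x y; rewrite l_lin l'_lin mulrBr; ring. Qed.

Lemma linear_form_sum (K : finType) (l : K -> (J -> R) -> R) :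
  (forall k, linear_form (l k)) -> linear_form (fun x => \sum_k l k x).
Proof.
by move=> l_lin a x y; rewrite mulr_sumr -big_split; apply: eq_bigr => k _; apply: l_lin.
Qed.

End LinearForms.

Arguments unit_vector {R J}.

Section Systems.
Variables (R : realFieldType) (J K : finType).
Variables (l : K -> (J -> R) -> R) (b : K -> R) (s : K -> bool).

Definition solves_system (x : J -> R) :=
  forall k, if s k then l k x < b k else l k x <= b k.

Definition infeasibility_certificate (y : K -> R) :=
  [/\ forall k, 0 <= y k, forall z, \sum_k y k * l k z = 0 &
      \sum_k y k * b k < 0 \/
      (\sum_k y k * b k <= 0 /\ exists k, s k && (0 < y k))].

Lemma certificate_of_constant_system :
  (forall k z, l k z = 0) -> ~ (exists x, solves_system x) ->
  exists y, infeasibility_certificate y.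
Proof.
move=> l0 no_sol.
have [k k_viol] : exists k, ~ (if s k then l k (fun=> 0) < b k else l k (fun=> 0) <= b k).
  by apply/existsNP => all_ok; apply: no_sol; exists (fun=> 0).
exists (fun k' => (k' == k)%:R); split=> [k'|z|]; first exact: ler0n.
  by apply: big1 => k' _; rewrite l0 mulr0.
under eq_bigr do rewrite mulrC.
rewrite sum_mul_indicator; move: k_viol; rewrite l0.
case sk: (s k) => k_viol.
  right; split; first by rewrite leNgt; apply/negP.
  by exists k; rewrite sk eqxx ltr01.
by left; rewrite ltNge; apply/negP.
Qed.

End Systems.

Section Combination.
Variables (R : realFieldType) (J K : finType).
Variables (l : K -> (J -> R) -> R) (b : K -> R) (s : K -> bool).

Lemma certificate_of_combination (K' : finType) (l' : K' -> (J -> R) -> R)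
    (b' : K' -> R) (s' : K' -> bool) (lam : K' -> K -> R) (y' : K' -> R) :
  (forall k' k, 0 <= lam k' k) ->
  (forall k' z, l' k' z = \sum_k lam k' k * l k z) ->
  (forall k', \sum_k lam k' k * b k <= b' k') ->
  (forall k', s' k' -> exists2 k, s k & 0 < lam k' k) ->
  infeasibility_certificate l' b' s' y' ->
  infeasibility_certificate l b s (fun k => \sum_k' y' k' * lam k' k).
Proof.
move=> lam_ge0 l'E b'E s'E [y'_ge0 y'_l y'_b].
have pull (F : K -> R) :
    \sum_k (\sum_k' y' k' * lam k' k) * F k = \sum_k' y' k' * \sum_k lam k' k * F k.
  under eq_bigr do rewrite mulr_suml; rewrite exchange_big /=.
  by apply: eq_bigr => k' _; rewrite mulr_sumr; apply: eq_bigr => k _; rewrite mulrA.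
have b_le : \sum_k (\sum_k' y' k' * lam k' k) * b k <= \sum_k' y' k' * b' k'.
  by rewrite pull; apply: ler_sum => k' _; rewrite ler_wpM2l.
split=> [k|z|]; first by apply: sumr_ge0 => k' _; rewrite mulr_ge0.
  by rewrite pull -[RHS](y'_l z); apply: eq_bigr => k' _; rewrite l'E.
case: y'_b => [b_lt|[b_le0 [k' /andP[/s'E[k sk lam_gt0] y'_gt0]]]].
  by left; apply: le_lt_trans b_le b_lt.
right; split; first exact: le_trans b_le b_le0.
exists k; rewrite sk /=; apply: lt_le_trans (mulr_gt0 y'_gt0 lam_gt0) _.
by apply: ler_term_sum => k''; rewrite mulr_ge0.
Qed.

End Combination.

Lemma exists_between (R : realFieldType) (K : finType) (P N : pred K)
    (L U : K -> R) (s : K -> bool) :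
  (forall p q, P p -> N q -> L q <= U p /\ (s p || s q -> L q < U p)) ->
  exists d, (forall q, N q -> L q <= d /\ (s q -> L q < d)) /\
            (forall p, P p -> d <= U p /\ (s p -> d < U p)).
Proof.
move=> LU.
case: (pickP N) => [q0 Nq0|N0]; case: (pickP P) => [p0 Pp0|P0].
- case: (arg_maxP L Nq0) => qm Nqm qm_max; case: (arg_minP U Pp0) => pm Ppm pm_min.
  have [LUm LUm_lt] := LU pm qm Ppm Nqm.
  exists ((L qm + U pm) / 2); split=> [q Nq|p Pp].
    have Lq_le : L q <= L qm := qm_max q Nq; have [_ Lq_lt] := LU pm q Ppm Nq.
    split=> [|sq]; first lra.
    by have := Lq_lt; rewrite sq orbT => /(_ isT) ?; lra.
  have Up_ge := pm_min p Pp; have [_ Up_gt] := LU p qm Pp Nqm.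
  split=> [|sp]; first lra.
  by have := Up_gt; rewrite sp => /(_ isT) ?; lra.
- case: (arg_maxP L Nq0) => qm Nqm qm_max.
  exists (L qm + 1); split=> [q Nq|p]; rewrite ?P0 //.
  have Lq_le : L q <= L qm := qm_max q Nq.
  by split=> [|_]; lra.
- case: (arg_minP U Pp0) => pm Ppm pm_min.
  exists (U pm - 1); split=> [q|p Pp]; rewrite ?N0 //.
  have Up_ge := pm_min p Pp.
  by split=> [|_]; lra.
- by exists 0; split=> [q|p]; rewrite ?N0 ?P0.
Qed.

Lemma divrB_cross (R : fieldType) (ap aq sp sq : R) : ap != 0 -> aq != 0 ->
  sp / ap - sq / aq = (- aq * sp + ap * sq) / (ap * - aq).
Proof. by move=> ap0 aq0; field; rewrite oppr_eq0 ap0 aq0. Qed.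

Section RatioCross.
Variables (R : realFieldType) (ap aq sp sq : R).
Hypotheses (ap_gt0 : 0 < ap) (aq_lt0 : aq < 0).

Let ap_neq0 : ap != 0 := lt0r_neq0 ap_gt0.
Let aq_neq0 : aq != 0 := ltr0_neq0 aq_lt0.
Let cross_den_gt0 : 0 < (ap * - aq)^-1.
Proof. by rewrite invr_gt0 mulr_gt0 ?oppr_gt0. Qed.

Lemma ler_ratio_cross : (sq / aq <= sp / ap) = (0 <= - aq * sp + ap * sq).
Proof. by rewrite -subr_ge0 divrB_cross // pmulr_lge0. Qed.

Lemma ltr_ratio_cross : (sq / aq < sp / ap) = (0 < - aq * sp + ap * sq).
Proof. by rewrite -subr_gt0 divrB_cross // pmulr_lgt0. Qed.

End RatioCross.

Section Elimination.
Variables (R : realFieldType) (J K : finType).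
Variables (l : K -> (J -> R) -> R) (b : K -> R) (s : K -> bool) (j0 : J).
Hypothesis l_lin : forall k, linear_form (l k).

Local Notation a k := (l k (unit_vector j0)).

(* Fourier-Motzkin: keep the rows not involving [x j0], and combine every row
   bounding [x j0] from above with every row bounding it from below. *)
Definition fm_weight (k' : K + K * K) (k : K) : R :=
  match k' with
  | inl i => if a i == 0 then (k == i)%:R else 0
  | inr (p, q) =>
      if (0 < a p) && (a q < 0) then - a q * (k == p)%:R + a p * (k == q)%:R
      else 0
  end.

Definition fm_strict (k' : K + K * K) : bool :=
  match k' with
  | inl i => (a i == 0) && s i
  | inr (p, q) => [&& 0 < a p, a q < 0 & s p || s q]
  end.

Definition fm_form k' (z : J -> R) := \sum_k fm_weight k' k * l k z.

Definition fm_bound k' := \sum_k fm_weight k' k * b k.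

Lemma fm_weight_ge0 k' k : 0 <= fm_weight k' k.
Proof.
case: k' => [i|[p q]] /=; first by case: ifP.
case: ifP => // /andP[ap_gt0 aq_lt0].
by rewrite addr_ge0 ?mulr_ge0 ?ler0n ?oppr_ge0 ?ltW.
Qed.

Lemma fm_weight_eliminates k' : \sum_k fm_weight k' k * a k = 0.
Proof.
case: k' => [i|[p q]] /=.
  case: eqP => [ai0|_]; last by rewrite big1 // => k _; rewrite mul0r.
  by rewrite sum_indicator_mul.
case: (_ && _); last by rewrite big1 // => k _; rewrite mul0r.
by rewrite sum_indicator2_mul; ring.
Qed.

Lemma fm_form_depends_only_on S k' :
  (forall k, depends_only_on S (l k)) -> depends_only_on (S :\ j0) (fm_form k').
Proof.
move=> l_dep z z' zz'.
have -> : fm_form k' z = fm_form k' (update z' j0 (z j0)).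
  apply: eq_bigr => k _; congr (_ * _); apply: l_dep => j Sj.
  rewrite /update; case: eqP => [->|/eqP j_neq] //.
  by apply: zz'; rewrite !inE j_neq.
transitivity (\sum_k fm_weight k' k * l k z'
              + (\sum_k fm_weight k' k * a k) * (z j0 - z' j0)).
  rewrite mulr_suml -big_split; apply: eq_bigr => k _ /=.
  by rewrite linear_form_update // mulrDr mulrA.
by rewrite fm_weight_eliminates mul0r addr0.
Qed.

Lemma fm_strict_weight k' : fm_strict k' -> exists2 k, s k & 0 < fm_weight k' k.
Proof.
case: k' => [i /andP[/eqP ai0 si]|[p q] /and3P[ap_gt0 aq_lt0 spq]] /=.
  by exists i; rewrite // ai0 eqxx eqxx ltr01.
have pq : (p == q) = false by apply: contraTF ap_gt0 => /eqP->; rewrite -leNgt ltW.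
rewrite ap_gt0 aq_lt0 /=; case/orP: spq => [sp|sq].
  by exists p; rewrite // eqxx pq mulr0 addr0 mulr1 oppr_gt0.
by exists q; rewrite // eqxx eq_sym pq mulr0 add0r mulr1.
Qed.

Lemma fm_solution_extends x : solves_system fm_form fm_bound fm_strict x ->
  exists t, solves_system l b s (update x j0 t).
Proof.
move=> x_sol; pose slack k := b k - l k x.
have pair_ok p q : 0 < a p -> a q < 0 ->
    slack q / a q <= slack p / a p /\ (s p || s q -> slack q / a q < slack p / a p).
  move=> ap_gt0 aq_lt0; have := x_sol (inr (p, q)).
  rewrite /fm_form /fm_bound /fm_strict /fm_weight ap_gt0 aq_lt0 !andTb.
  rewrite !sum_indicator2_mul ler_ratio_cross // ltr_ratio_cross // /slack.
  by case: (s p || s q) => pair_row; split=> //; lra.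
have [d [lower upper]] := exists_between pair_ok.
exists (x j0 + d) => k; rewrite linear_form_update // addrAC subrr add0r.
case: (ltgtP (a k) 0) => ak.
- have [] := lower k ak; rewrite ler_ndivrMr // ltr_ndivrMr // /slack.
  by case: (s k) => [? /(_ isT)|? _]; rewrite mulrC; lra.
- have [] := upper k ak; rewrite ler_pdivlMr // ltr_pdivlMr // /slack.
  by case: (s k) => [? /(_ isT)|? _]; rewrite mulrC; lra.
- have := x_sol (inl k); rewrite /fm_form /fm_bound /fm_strict /fm_weight ak eqxx.
  by rewrite mul0r addr0 andTb !sum_indicator_mul.
Qed.

End Elimination.

Theorem motzkin_transposition (R : realFieldType) (J K : finType) (S : {set J})
    (l : K -> (J -> R) -> R) (b : K -> R) (s : K -> bool) :
  (forall k, linear_form (l k)) -> (forall k, depends_only_on S (l k)) ->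
  ~ (exists x, solves_system l b s x) -> exists y, infeasibility_certificate l b s y.
Proof.
have [m] := ubnP #|S|; elim: m S K l b s => // m IH S K l b s S_lt l_lin l_dep no_sol.
have [S0|[j0 j0S]] := set_0Vmem S.
  apply: certificate_of_constant_system no_sol => k z.
  by rewrite (l_dep k z (fun=> 0)) ?linear_form0 // => j; rewrite S0 inE.
have [y' y'_cert] : exists y',
    infeasibility_certificate (fm_form l j0) (fm_bound l b j0) (fm_strict l s j0) y'.
  apply: (IH (S :\ j0)).
  - by move: S_lt; rewrite (cardsD1 j0) j0S add1n ltnS.
  - by move=> k'; apply: linear_form_sum => k; apply: linear_formZ.
  - by move=> k'; apply: fm_form_depends_only_on.
  - case=> x /(fm_solution_extends l_lin) [t t_sol].
    by apply: no_sol; exists (update x j0 t).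
exists (fun k => \sum_k' y' k' * fm_weight l j0 k' k).
apply: certificate_of_combination y'_cert => //.
  exact: fm_weight_ge0.
exact: fm_strict_weight.
Qed.

Theorem affine_farkas (R : realFieldType) (J K : finType) (l : K -> (J -> R) -> R)
    (b : K -> R) (c : (J -> R) -> R) (v : R) :
  (forall k, linear_form (l k)) -> linear_form c ->
  (exists x, forall k, l k x <= b k) ->
  (forall x, (forall k, l k x <= b k) -> c x <= v) ->
  exists y, [/\ forall k, 0 <= y k, forall z, \sum_k y k * l k z = c z &
                \sum_k y k * b k <= v].
Proof.
move=> l_lin c_lin [x0 x0_feas] c_le.
(* Add the strict row [c x > v]; its multiplier [t] is positive as [l x <= b] is
   feasible, and dividing by it gives [y]. *)
pose l' (k' : K + 'I_1) z := if k' is inl k then l k z else - c z.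
pose b' (k' : K + 'I_1) := if k' is inl k then b k else - v.
pose s' (k' : K + 'I_1) := if k' is inr _ then true else false.
have l'_lin k' : linear_form (l' k').
  case: k' => [k|o]; first exact: l_lin.
  by move=> a x y /=; rewrite c_lin mulrN opprD.
have l'_dep k' : depends_only_on [set: J] (l' k').
  by move=> x x' xx'; congr l'; apply: funext => j; apply: xx'; rewrite inE.
have no_sol : ~ exists x, solves_system l' b' s' x.
  case=> x x_sol; have := x_sol (inr ord0); rewrite /= ltrN2 ltNge c_le //.
  by move=> k; apply: (x_sol (inl k)).
have [y' [y'_ge0 y'_l y'_b]] := motzkin_transposition l'_lin l'_dep no_sol.
pose t := y' (inr ord0).
have split_sum (F : K + 'I_1 -> R) : \sum_k' F k' = \sum_k F (inl k) + F (inr ord0).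
  by rewrite big_sumType big_ord1.
have l_comb z : \sum_k y' (inl k) * l k z = t * c z.
  by have := y'_l z; rewrite split_sum /= mulrN => /eqP; rewrite subr_eq0 => /eqP.
have b_comb : \sum_k y' (inl k) * b k - t * v <= 0.
  have -> : \sum_k y' (inl k) * b k - t * v = \sum_k' y' k' * b' k'.
    by rewrite split_sum mulrN.
  by case: y'_b => [/ltW|[]].
have t_gt0 : 0 < t.
  rewrite lt0r y'_ge0 andbT; apply/eqP => t0.
  have : \sum_k y' (inl k) * l k x0 <= \sum_k y' (inl k) * b k.
    by apply: ler_sum => k _; rewrite ler_wpM2l.
  rewrite l_comb t0 mul0r leNgt => /negP; apply.
  case: y'_b => [|[_ [[k|o] //]]]; first by rewrite split_sum /= -/t t0 mul0r addr0.
  by rewrite (ord1 o) -/t t0 ltxx.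
exists (fun k => y' (inl k) / t); split=> [k|z|]; first by rewrite divr_ge0 ?y'_ge0 ?ltW.
  under eq_bigr do rewrite mulrAC.
  by rewrite -mulr_suml l_comb mulrAC divff ?mul1r // gt_eqF.
under eq_bigr do rewrite mulrAC.
rewrite -mulr_suml ler_pdivrMr //; lra.
Qed.

Section Divergence.
Variables (R : realType) (V : finType) (e : rel V) (w : V -> V -> R).

Lemma divw0 v : divw w (fun _ _ => 0) v = 0.
Proof. by rewrite /divw big1 ?mulr0 // => y _; rewrite subrr mulr0. Qed.

Hypothesis w_sym : forall x y, w x y = w y x.

Lemma sum_mul_divw (u : V -> R) (q : V -> V -> R) :
  \sum_x u x * divw w q x = 2^-1 * \sum_x \sum_y w x y * q x y * (u x - u y).
Proof.
transitivity (2^-1 * (\sum_x \sum_y w x y * q x y * u x -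
                      \sum_x \sum_y w x y * q y x * u x)).
  rewrite -sumrB mulr_sumr; apply: eq_bigr => x _.
  rewrite /divw -sumrB !mulr_sumr; apply: eq_bigr => y _; ring.
have -> : \sum_x \sum_y w x y * q y x * u x = \sum_x \sum_y w x y * q x y * u y.
  by rewrite exchange_big; apply: eq_bigr => x _; apply: eq_bigr => y _; rewrite w_sym.
congr (_ * _); rewrite -sumrB; apply: eq_bigr => x _; rewrite -sumrB.
by apply: eq_bigr => y _; ring.
Qed.

Hypotheses (w_gt0 : forall x y, e x y -> 0 < w x y)
           (w_eq0 : forall x y, ~~ e x y -> w x y = 0).

Lemma sum_mul_divw_le_TVw (u : V -> R) (q : V -> V -> R) :
  (forall x y, e x y -> `|q x y| <= 1) -> \sum_x u x * divw w q x <= TVw w u.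
Proof.
move=> q_le1; rewrite sum_mul_divw /TVw ler_wpM2l ?invr_ge0 ?ler0n //.
apply: ler_sum => x _; apply: ler_sum => y _.
have [exy|nexy] := boolP (e x y); last by rewrite w_eq0 // !mul0r.
rewrite -mulrA ler_wpM2l ?(ltW (w_gt0 exy)) // distrC.
by apply: le_trans (ler_norm _) _; rewrite normrM ler_piMl ?q_le1.
Qed.

Lemma sum_mul_divw_sg (u : V -> R) :
  \sum_x u x * divw w (fun x y => Num.sg (u x - u y)) x = TVw w u.
Proof.
rewrite sum_mul_divw /TVw; congr (_ * _); apply: eq_bigr => x _.
by apply: eq_bigr => y _; rewrite -mulrA -normrEsg distrC.
Qed.

End Divergence.

Section SizePenalty.
Variables (R : realType) (Sl Su : nat).
Hypothesis Sl_le_Su : (Sl <= Su)%N.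

Lemma Pgam0 t : Pgam 0 Sl Su t = 0 :> R.
Proof. by rewrite /Pgam; case: ifP => _; rewrite ?mul0r //; case: ifP; rewrite ?mul0r. Qed.

Lemma Pgam_ge_linear (g r1 r2 t : R) : 0 <= r1 <= g -> 0 <= r2 <= g ->
  r1 * (Sl%:R - t) + r2 * (t - Su%:R) <= Pgam g Sl Su t.
Proof.
have SlSu : Sl%:R <= Su%:R :> R by rewrite ler_nat.
move=> /andP[r1_ge0 r1_le] /andP[r2_ge0 r2_le]; rewrite /Pgam.
case: ifP => [t_gt|/negbT]; first nra.
rewrite -leNgt => t_le; case: ifP => [t_lt|/negbT]; first nra.
by rewrite -leNgt => t_ge; nra.
Qed.

Lemma Pgam_le_excess (g t Y1 Y2 : R) : 0 <= g -> 0 <= Y1 -> 0 <= Y2 ->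
  Sl%:R <= t + Y1 -> t <= Su%:R + Y2 -> Pgam g Sl Su t <= g * (Y1 + Y2).
Proof.
move=> g_ge0 Y1_ge0 Y2_ge0 lo up; rewrite /Pgam.
case: ifP => [t_gt|_]; first nra.
case: ifP => [t_lt|_]; first nra.
by rewrite mulr_ge0 ?addr_ge0.
Qed.

End SizePenalty.

Section Gamma.
Variables (R : realType) (gamma : \bar R).
Hypothesis gamma_ge0 : (0 <= gamma)%E.

(* For [gamma = +oo] the cap [rho_cap_coef * r <= fine gamma] is the vacuous [0 <= 0]. *)
Definition rho_cap_coef : R := if gamma is +oo%E then 0 else 1.

Lemma rho_okE r : rho_ok gamma r <-> 0 <= r /\ rho_cap_coef * r <= fine gamma.
Proof.
rewrite /rho_ok /rho_cap_coef; move: gamma_ge0; case: gamma => [g||] //= _.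
  by rewrite lee_fin mul1r.
by rewrite mul0r lexx leey.
Qed.

Variables (Sl Su : nat).
Hypothesis Sl_le_Su : (Sl <= Su)%N.

Lemma rho_terms_le_Pgam (r1 r2 t : R) : rho_ok gamma r1 -> rho_ok gamma r2 ->
  (gamma = +oo%E -> Sl%:R <= t <= Su%:R) ->
  r1 * (Sl%:R - t) + r2 * (t - Su%:R) <= Pgam (fine gamma) Sl Su t.
Proof.
rewrite !rho_okE /rho_cap_coef; move: gamma_ge0.
case: gamma => [g||] //= _ [r1_ge0 r1_le] [r2_ge0 r2_le] sizes.
  rewrite !mul1r in r1_le r2_le.
  by rewrite (Pgam_ge_linear Sl_le_Su) ?r1_ge0 ?r1_le ?r2_ge0 ?r2_le.
have /andP[lo up] := sizes erefl; rewrite Pgam0; nra.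
Qed.

Lemma Pgam_le_multipliers (t Y1 Y2 : R) : 0 <= Y1 -> 0 <= Y2 ->
  Sl%:R <= t + rho_cap_coef * Y1 -> t <= Su%:R + rho_cap_coef * Y2 ->
  Pgam (fine gamma) Sl Su t <= fine gamma * (Y1 + Y2) /\
  (gamma = +oo%E -> Sl%:R <= t <= Su%:R).
Proof.
rewrite /rho_cap_coef; move: gamma_ge0; case: gamma => [g||] //=.
  rewrite lee_fin !mul1r => g_ge0 Y1_ge0 Y2_ge0 lo up; split=> //.
  exact: Pgam_le_excess.
rewrite !mul0r !addr0 Pgam0 => _ _ _ lo up; split=> // _.
by rewrite lo up.
Qed.

End Gamma.

(* As [fine +oo = 0], [Pgam (fine gamma)] is the zero penalty both for [gamma = 0]
   and for [gamma = +oo]. *)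
Lemma relaxed_objE (R : realType) (V : finType) (w : V -> V -> R) (n : nat)
    (C : 'I_n -> V -> R) (Sl Su : 'I_n -> nat) (gamma : \bar R) u :
  (0 <= gamma)%E ->
  relaxed_obj w C Sl Su gamma u =
  (relaxed_energy w C u + \sum_i Pgam (fine gamma) (Sl i) (Su i) (unorm (u i)))%:E.
Proof.
rewrite /relaxed_obj; case: gamma => [g||] //= g_ge0.
  move: g_ge0; rewrite lee_fin le_eqVlt => /predU1P[<-|->] //.
  by rewrite ltxx big1 ?addr0 // => i _; rewrite Pgam0.
by rewrite big1 ?addr0 // => i _; rewrite Pgam0.
Qed.

Lemma exists_sum_between (R : realFieldType) (I : finType) (lo hi : I -> R) (N : R) :
  (forall i, lo i <= hi i) -> \sum_i lo i <= N <= \sum_i hi i ->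
  exists a, (forall i, lo i <= a i <= hi i) /\ \sum_i a i = N.
Proof.
move=> lo_hi /andP[loN Nhi].
have [lohi_eq|lohi_neq] := eqVneq (\sum_i hi i - \sum_i lo i) 0.
  exists lo; split=> [i|]; first by rewrite lexx lo_hi.
  apply/eqP; rewrite eq_le loN andTb; move/eqP: lohi_eq; rewrite subr_eq0.
  by move=> /eqP <-.
have lohi_gt0 : 0 < \sum_i hi i - \sum_i lo i.
  by rewrite lt0r lohi_neq subr_ge0 (le_trans loN).
pose lam := (N - \sum_i lo i) / (\sum_i hi i - \sum_i lo i).
have lam_ge0 : 0 <= lam by apply: divr_ge0; [rewrite subr_ge0 | exact: ltW].
have lam_le1 : lam <= 1 by rewrite ler_pdivrMr // mul1r lerD2r.
exists (fun i => lo i + lam * (hi i - lo i)); split=> [i|].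
  have := lo_hi i; rewrite -subr_ge0 => d_ge0.
  rewrite lerDl mulr_ge0 //=; have := ler_wpM2r d_ge0 lam_le1; lra.
by rewrite big_split /= -mulr_sumr sumrB divfK // subrKC.
Qed.

Section WeakDuality.
Variables (R : realType) (V : finType) (e : rel V) (w : V -> V -> R) (n : nat).
Variables (C : 'I_n -> V -> R) (Sl Su : 'I_n -> nat) (gamma : \bar R).
Hypotheses (w_sym : forall x y, w x y = w y x)
           (w_gt0 : forall x y, e x y -> 0 < w x y)
           (w_eq0 : forall x y, ~~ e x y -> w x y = 0).
Hypotheses (Sl_le_Su : forall i, (Sl i <= Su i)%N) (gamma_ge0 : (0 <= gamma)%E).

Local Notation penalty u := (\sum_i Pgam (fine gamma) (Sl i) (Su i) (unorm (u i))).

Lemma lagrangianE u ps p q r1 r2 : (forall x, \sum_i u i x = 1) ->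
  lagrangian w Sl Su u ps p q r1 r2 =
  \sum_i (\sum_x u i x * divw w (q i) x + \sum_x u i x * p i x +
          (r1 i * ((Sl i)%:R - unorm (u i)) + r2 i * (unorm (u i) - (Su i)%:R))).
Proof.
move=> u_part; rewrite /lagrangian /flow_obj.
have -> : \sum_x ps x = \sum_i \sum_x u i x * ps x.
  by rewrite exchange_big; apply: eq_bigr => x _; rewrite -mulr_suml u_part mul1r.
rewrite -!big_split; apply: eq_bigr => i _ /=.
have -> : \sum_x u i x * (divw w (q i) x - ps x + p i x + r2 i - r1 i) =
    \sum_x u i x * divw w (q i) x - \sum_x u i x * ps x + \sum_x u i x * p i x
    + (r2 i - r1 i) * unorm (u i).
  by rewrite /unorm mulr_sumr -sumrB -!big_split; apply: eq_bigr => x _ /=; ring.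
ring.
Qed.

Lemma lagrangian_le_relaxed u ps p q r1 r2 :
  relaxed_feasible Sl Su gamma u -> dual_box e C gamma p q r1 r2 ->
  lagrangian w Sl Su u ps p q r1 r2 <= relaxed_energy w C u + penalty u.
Proof.
move=> [[u01 u_part] u_sizes] dual_ok; rewrite lagrangianE // /relaxed_energy.
rewrite -!big_split; apply: ler_sum => i _ /=.
have [q_le [p_le [r1_ok r2_ok]]] := dual_ok i.
have div_le := sum_mul_divw_le_TVw w_sym w_gt0 w_eq0 (u i) q_le.
have pC_le : \sum_x u i x * p i x <= \sum_x C i x * u i x.
  apply: ler_sum => x _; rewrite mulrC ler_wpM2r ?p_le //.
  by case/andP: (u01 i x).
have := rho_terms_le_Pgam gamma_ge0 (Sl_le_Su i) r1_ok r2_ok (fun g_oo => u_sizes g_oo i).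
lra.
Qed.

Lemma pd_inner_le_relaxed_obj u : relaxed_feasible Sl Su gamma u ->
  (pd_inner w e C Sl Su gamma u <= relaxed_obj w C Sl Su gamma u)%E.
Proof.
move=> u_feas; rewrite relaxed_objE //; apply: ge_ereal_sup => _ [ps [p [q [r1 [r2 [dual_ok ->]]]]]].
by rewrite lee_fin lagrangian_le_relaxed.
Qed.

Lemma maxflow_le_pd_inner u :
  (maxflow_value w e C Sl Su gamma <= pd_inner w e C Sl Su gamma u)%E.
Proof.
apply: ge_ereal_sup => _ [ps [p [q [r1 [r2 [dual_ok flow_eq ->]]]]]].
apply: ereal_sup_ubound; exists ps, p, q, r1, r2; split=> //.
rewrite /lagrangian big1 ?addr0 // => i _; apply: big1 => x _.
by rewrite flow_eq subrK subrr mulr0.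
Qed.

Hypothesis sizes_V : (\sum_i Sl i <= #|V| <= \sum_i Su i)%N.

Lemma exists_relaxed_feasible : exists u : 'I_n -> V -> R, relaxed_feasible Sl Su gamma u.
Proof.
have sizes_R : \sum_i (Sl i)%:R <= (#|V|%:R : R) <= \sum_i (Su i)%:R.
  by rewrite -!natr_sum !ler_nat.
have Sl_le_Su_R i : (Sl i)%:R <= (Su i)%:R :> R by rewrite ler_nat.
have [a [a_bnd a_sum]] := exists_sum_between Sl_le_Su_R sizes_R.
have a_ge0 i : 0 <= a i by case/andP: (a_bnd i) => /(le_trans _) -> //.
pose u i (x : V) := a i / #|V|%:R.
have unorm_u i : unorm (u i) = a i.
  have [V0|V_gt0] := posnP #|V|.
    rewrite /unorm big1 => [|x _]; last by have := card0_eq V0 x; rewrite !inE.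
    apply/esym/le_anti; rewrite a_ge0 andbT.
    by have := ler_term_sum i a_ge0; rewrite a_sum V0.
  by rewrite /unorm sumr_const -[#|xpredT|]/#|V| -(mulr_natr (a i / _)) divfK ?pnatr_eq0 -?lt0n.
exists u; split; last by move=> _ i; rewrite unorm_u.
have u_part x : \sum_i u i x = 1.
  by rewrite -mulr_suml a_sum divff // pnatr_eq0 -lt0n; apply/card_gt0P; exists x.
have u_ge0 i x : 0 <= u i x by rewrite divr_ge0.
split=> // i x; rewrite u_ge0 -(u_part x).
exact: (ler_term_sum i (u_ge0^~ x)).
Qed.

End WeakDuality.

Section FlowLP.
Variables (R : realType) (V : finType) (e : rel V) (w : V -> V -> R) (n : nat).
Variables (C : 'I_n -> V -> R) (Sl Su : 'I_n -> nat) (gamma : \bar R).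
Hypotheses (w_sym : forall x y, w x y = w y x)
           (w_gt0 : forall x y, e x y -> 0 < w x y)
           (w_eq0 : forall x y, ~~ e x y -> w x y = 0).
Hypotheses (Sl_le_Su : forall i, (Sl i <= Su i)%N)
           (sizes_V : (\sum_i Sl i <= #|V| <= \sum_i Su i)%N)
           (gamma_ge0 : (0 <= gamma)%E).

Local Notation flow_var := (V + 'I_n * V + 'I_n * V * V + 'I_n + 'I_n)%type.

Definition flow_ps (x : flow_var -> R) v := x (inl (inl (inl (inl v)))).
Definition flow_p (x : flow_var -> R) i v := x (inl (inl (inl (inr (i, v))))).
Definition flow_q (x : flow_var -> R) i a b := x (inl (inl (inr (i, a, b)))).
Definition flow_r1 (x : flow_var -> R) i := x (inl (inr i)).
Definition flow_r2 (x : flow_var -> R) i := x (inr i).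

Definition pack_flow (ps : V -> R) (p : 'I_n -> V -> R) (q : 'I_n -> V -> V -> R)
    (r1 r2 : 'I_n -> R) : flow_var -> R :=
  fun j => match j with
  | inl (inl (inl (inl v))) => ps v
  | inl (inl (inl (inr (i, v)))) => p i v
  | inl (inl (inr (i, a, b))) => q i a b
  | inl (inr i) => r1 i
  | inr i => r2 i
  end.

Definition flow_residual (x : flow_var -> R) i v :=
  divw w (flow_q x i) v - flow_ps x v + flow_p x i v - flow_r1 x i + flow_r2 x i.

(* The capacity bound on [q] and the conservation law are each split into two
   inequalities indexed by [neg]; [cap] selects [rho <= gamma] rather than [0 <= rho]. *)
Local Notation flow_row :=
  ('I_n * V * V * bool + 'I_n * V + 'I_n * bool * bool + 'I_n * V * bool)%type.

Definition flow_row_form (k : flow_row) (x : flow_var -> R) : R :=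
  match k with
  | inl (inl (inl (i, a, b, neg))) => (-1) ^+ neg * ((e a b)%:R * flow_q x i a b)
  | inl (inl (inr (i, v))) => flow_p x i v
  | inl (inr (i, is_r1, cap)) =>
      (if cap then rho_cap_coef gamma else -1) *
      (if is_r1 then flow_r1 x i else flow_r2 x i)
  | inr (i, v, neg) => (-1) ^+ neg * flow_residual x i v
  end.

Definition flow_row_bound (k : flow_row) : R :=
  match k with
  | inl (inl (inl _)) => 1
  | inl (inl (inr (i, v))) => C i v
  | inl (inr (_, _, cap)) => if cap then fine gamma else 0
  | inr _ => 0
  end.

Definition flow_objective (x : flow_var -> R) :=
  flow_obj Sl Su (flow_ps x) (flow_r1 x) (flow_r2 x).

Lemma flow_row_form_linear k : linear_form (flow_row_form k).
Proof.
have divw_lin i v : linear_form (fun x => divw w (flow_q x i) v).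
  apply: linear_formZ; apply: linear_form_sum => a.
  by apply: linear_formZ; apply: linear_formB; apply: linear_form_proj.
case: k => [[[[[[i a] b] neg]|[i v]]|[[i is_r1] cap]]|[[i v] neg]] /=.
- by do 2 apply: linear_formZ; apply: linear_form_proj.
- exact: linear_form_proj.
- by apply: linear_formZ; case: is_r1; apply: linear_form_proj.
- apply: linear_formZ; rewrite /flow_residual.
  apply: linear_formD; last exact: linear_form_proj.
  apply: linear_formB; last exact: linear_form_proj.
  apply: linear_formD; last exact: linear_form_proj.
  by apply: linear_formB; last exact: linear_form_proj.
Qed.

Lemma flow_objective_linear : linear_form flow_objective.
Proof.
apply: linear_formD; first by apply: linear_form_sum => v; apply: linear_form_proj.
by apply: linear_form_sum => i a x z; rewrite /flow_r1 /flow_r2; ring.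
Qed.

Lemma flow_rows_feasible_flow x : (forall k, flow_row_form k x <= flow_row_bound k) ->
  dual_box e C gamma (flow_p x) (flow_q x) (flow_r1 x) (flow_r2 x) /\
  (forall i v, divw w (flow_q x i) v - flow_ps x v + flow_p x i v =
               flow_r1 x i - flow_r2 x i).
Proof.
move=> x_ok; split=> [i|i v].
  have rho_row is_r1 : rho_ok gamma (if is_r1 then flow_r1 x i else flow_r2 x i).
    apply/(rho_okE gamma_ge0); split; last exact: (x_ok (inl (inr (i, is_r1, true)))).
    by have := x_ok (inl (inr (i, is_r1, false))); rewrite /= mulN1r oppr_le0.
  split; [|split; [|split; [exact: (rho_row true)|exact: (rho_row false)]]].
  - move=> a b eab; have := x_ok (inl (inl (inl (i, a, b, false)))).
    have := x_ok (inl (inl (inl (i, a, b, true)))).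
    rewrite /= eab expr1 expr0 !mul1r mulN1r lerNl => lo up.
    by rewrite ler_norml lo up.
  - by move=> v; apply: (x_ok (inl (inl (inr (i, v))))).
have := x_ok (inr (i, v, false)); have := x_ok (inr (i, v, true)).
rewrite /= expr1 expr0 mul1r mulN1r oppr_le0 /flow_residual => res_ge0 res_le0.
lra.
Qed.

Definition trivial_flow : flow_var -> R :=
  let ps v := - \sum_i `|C i v| in
  pack_flow ps (fun=> ps) (fun _ _ _ => 0) (fun=> 0) (fun=> 0).

Lemma trivial_flow_feasible k : flow_row_form k trivial_flow <= flow_row_bound k.
Proof.
case: k => [[[[[[i a] b] neg]|[i v]]|[[i is_r1] cap]]|[[i v] neg]];
  rewrite /= /flow_residual /flow_ps /flow_p /flow_q /flow_r1 /flow_r2 /trivial_flow /=.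
- by rewrite !mulr0 ler01.
- rewrite lerNl (le_trans (ler_norm _)) // normrN.
  exact: (ler_term_sum i (fun j => normr_ge0 (C j v))).
- by case: is_r1; case: cap; rewrite mulr0 ?fine_ge0.
- by rewrite divw0 sub0r opprK subrr subr0 addr0 mulr0.
Qed.

Section Certificate.
Variable y : flow_row -> R.
Hypotheses (y_ge0 : forall k, 0 <= y k)
           (y_comb : forall z, \sum_k y k * flow_row_form k z = flow_objective z).

Local Notation y_q k := (y (inl (inl (inl k)))).
Local Notation y_p k := (y (inl (inl (inr k)))).
Local Notation y_rho k := (y (inl (inr k))).

(* The labelling is the multiplier of the conservation equation at [(i, v)]. *)
Definition cert_u i v := y (inr (i, v, true)) - y (inr (i, v, false)).

Lemma certificate_split z : flow_objective z =
  \sum_k y_q k * flow_row_form (inl (inl (inl k))) z + \sum_k y_p k * flow_p z k.1 k.2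
  + \sum_k y_rho k * flow_row_form (inl (inr k)) z
  - \sum_i \sum_v cert_u i v * flow_residual z i v.
Proof.
rewrite -y_comb !big_sumType /=; congr (_ + _ + _ + _).
  by apply: eq_bigr => -[].
rewrite !sum_pair -sumrN; apply: eq_bigr => i _; rewrite -sumrN; apply: eq_bigr => v _.
by rewrite big_bool /= /cert_u expr1 expr0; ring.
Qed.

Lemma rho_partE z : \sum_k y_rho k * flow_row_form (inl (inr k)) z =
  \sum_i ((rho_cap_coef gamma * y_rho (i, true, true) - y_rho (i, true, false)) * flow_r1 z i
         + (rho_cap_coef gamma * y_rho (i, false, true) - y_rho (i, false, false)) * flow_r2 z i).
Proof. by rewrite !sum_pair; apply: eq_bigr => i _; rewrite !big_bool /=; ring. Qed.

Lemma certificate_pack ps p q r1 r2 :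
  \sum_v ps v + \sum_i (r1 i * (Sl i)%:R - r2 i * (Su i)%:R) =
  \sum_k y_q k * flow_row_form (inl (inl (inl k))) (pack_flow ps p q r1 r2)
  + \sum_k y_p k * p k.1 k.2
  + \sum_i ((rho_cap_coef gamma * y_rho (i, true, true) - y_rho (i, true, false)) * r1 i
         + (rho_cap_coef gamma * y_rho (i, false, true) - y_rho (i, false, false)) * r2 i)
  - \sum_i \sum_v cert_u i v * (divw w (q i) v - ps v + p i v - r1 i + r2 i).
Proof. by have := certificate_split (pack_flow ps p q r1 r2); rewrite rho_partE => split_pack; exact: split_pack. Qed.

Lemma q_part0 ps p r1 r2 :
  \sum_k y_q k * flow_row_form (inl (inl (inl k))) (pack_flow ps p (fun _ _ _ => 0) r1 r2)
  = 0.
Proof. by apply: big1 => -[[[i a] b] neg] _; rewrite /= /flow_q /= !mulr0. Qed.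

Lemma cert_u_partition v0 : \sum_i cert_u i v0 = 1.
Proof.
have := certificate_pack (fun v => (v == v0)%:R) (fun _ _ => 0) (fun _ _ _ => 0)
                         (fun=> 0) (fun=> 0).
rewrite q_part0 [X in _ = _ + X + _ - _]big1 => [|k _]; last by rewrite mulr0.
rewrite [X in _ = _ + X - _]big1 => [|i _]; last by rewrite !mulr0 addr0.
rewrite sum_indicator big1 => [|i _]; last by rewrite !mul0r subrr.
rewrite !add0r addr0 => ->; rewrite -sumrN; apply: eq_bigr => i _.
rewrite -sumrN -(sum_mul_indicator (cert_u i) v0); apply: eq_bigr => v _.
by rewrite divw0; ring.
Qed.

Lemma cert_p_weight i0 v0 : y_p (i0, v0) = cert_u i0 v0.
Proof.
have := certificate_pack (fun=> 0) (fun i v => ((i, v) == (i0, v0))%:R) (fun _ _ _ => 0)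
                         (fun=> 0) (fun=> 0).
rewrite q_part0 [X in _ = _ + X - _]big1 => [|i _]; last by rewrite !mulr0 addr0.
rewrite big1 // big1 => [|i _]; last by rewrite !mul0r subrr.
rewrite sum_pair /= sum_pair_mul_indicator.
under eq_bigr do under eq_bigr do rewrite divw0 subrr add0r !subr0 addr0.
by rewrite sum_pair_mul_indicator !addr0 add0r => /eqP; rewrite eq_sym subr_eq0 => /eqP.
Qed.

Lemma cert_size_lower i0 :
  (Sl i0)%:R = unorm (cert_u i0) - y_rho (i0, true, false)
               + rho_cap_coef gamma * y_rho (i0, true, true).
Proof.
have := certificate_pack (fun=> 0) (fun _ _ => 0) (fun _ _ _ => 0)
                         (fun i => (i == i0)%:R) (fun=> 0).
rewrite q_part0 [X in _ = _ + X + _ - _]big1 => [|k _]; last by rewrite mulr0.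
rewrite big1 // !add0r.
under eq_bigr do rewrite mul0r subr0; rewrite sum_indicator_mul.
under eq_bigr do rewrite mulr0 addr0; rewrite sum_mul_indicator.
have -> : \sum_i \sum_v cert_u i v * (divw w (fun _ _ => 0) v - 0 + 0 - (i == i0)%:R + 0)
          = - unorm (cert_u i0).
  rewrite -(sum_indicator_mul (fun i => unorm (cert_u i)) i0) -sumrN.
  apply: eq_bigr => i _; rewrite /unorm mulr_sumr -sumrN.
  by apply: eq_bigr => v _; rewrite divw0; ring.
by move=> ->; ring.
Qed.

Lemma cert_size_upper i0 :
  (Su i0)%:R = unorm (cert_u i0) + y_rho (i0, false, false)
               - rho_cap_coef gamma * y_rho (i0, false, true).
Proof.
have := certificate_pack (fun=> 0) (fun _ _ => 0) (fun _ _ _ => 0)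
                         (fun=> 0) (fun i => (i == i0)%:R).
rewrite q_part0 [X in _ = _ + X + _ - _]big1 => [|k _]; last by rewrite mulr0.
rewrite big1 // !add0r.
under eq_bigr do rewrite mul0r sub0r -mulrN; rewrite sum_indicator_mul.
under eq_bigr do rewrite mulr0 add0r; rewrite sum_mul_indicator.
have -> : \sum_i \sum_v cert_u i v * (divw w (fun _ _ => 0) v - 0 + 0 - 0 + (i == i0)%:R)
          = unorm (cert_u i0).
  rewrite -(sum_indicator_mul (fun i => unorm (cert_u i)) i0).
  apply: eq_bigr => i _; rewrite /unorm mulr_sumr.
  by apply: eq_bigr => v _; rewrite divw0; ring.
by move=> Su_eq; apply: oppr_inj; rewrite Su_eq; ring.
Qed.

(* Test the identity on the flow [q = sign (u i x - u i y)], which attains [TV(u i)]. *)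
Lemma cert_TVw_le : \sum_i TVw w (cert_u i) <= \sum_k y_q k.
Proof.
have := certificate_pack (fun=> 0) (fun _ _ => 0)
  (fun i a b => Num.sg (cert_u i a - cert_u i b)) (fun=> 0) (fun=> 0).
rewrite [X in _ = _ + X + _ - _]big1 => [|k _]; last by rewrite mulr0.
rewrite big1 // [X in 0 + X]big1 => [|i _]; last by rewrite !mul0r subrr.
rewrite [X in _ = _ + X - _]big1 => [|i _]; last by rewrite !mulr0 addr0.
have -> : \sum_i \sum_v cert_u i v *
    (divw w (fun a b => Num.sg (cert_u i a - cert_u i b)) v - 0 + 0 - 0 + 0) =
    \sum_i TVw w (cert_u i).
  apply: eq_bigr => i _; rewrite -sum_mul_divw_sg //.
  by apply: eq_bigr => v _; rewrite subr0 !addr0 subr0.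
rewrite !addr0 => /eqP; rewrite eq_sym subr_eq0 => /eqP <-.
apply: ler_sum => -[[[i a] b] neg] _; rewrite -[X in _ <= X]mulr1 ler_wpM2l //=.
rewrite /flow_q /= (le_trans (ler_norm _)) // !normrM normr_sg normrX normrN1 expr1n mul1r.
by case: (e a b); case: (_ != 0); rewrite ?normr1 ?normr0 ?mul1r ?mul0r ?ler01.
Qed.

Lemma cert_u_relaxed_le_bound : relaxed_feasible Sl Su gamma cert_u /\
  relaxed_energy w C cert_u + \sum_i Pgam (fine gamma) (Sl i) (Su i) (unorm (cert_u i))
  <= \sum_k y k * flow_row_bound k.
Proof.
have u_ge0 i v : 0 <= cert_u i v by rewrite -cert_p_weight.
have pen i : Pgam (fine gamma) (Sl i) (Su i) (unorm (cert_u i))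
      <= fine gamma * (y_rho (i, true, true) + y_rho (i, false, true)) /\
    (gamma = +oo%E -> (Sl i)%:R <= unorm (cert_u i) <= (Su i)%:R).
  apply: Pgam_le_multipliers => //.
  - by have := y_ge0 (inl (inr (i, true, false))); rewrite {1}(cert_size_lower i); lra.
  - by have := y_ge0 (inl (inr (i, false, false))); rewrite {1}(cert_size_upper i); lra.
split.
  split=> [|g_oo i]; last exact: (pen i).2.
  split=> [i v|]; last exact: cert_u_partition.
  rewrite u_ge0 -(cert_u_partition v).
  exact: (ler_term_sum i (u_ge0^~ v)).
rewrite /relaxed_energy !big_sumType /= [X in _ <= _ + X]big1 ?addr0 => [|k _]; last first.
  by rewrite mulr0.
rewrite [X in _ <= _ + X + _](eq_bigr (fun k => y_p k * C k.1 k.2)) => [|[] //].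
rewrite [X in _ <= _ + X](eq_bigr (fun k => y_rho k * (if k.2 then fine gamma else 0)))
  => [|[[]] //].
have C_eq : \sum_i \sum_x C i x * cert_u i x = \sum_k y_p k * C k.1 k.2.
  rewrite sum_pair; apply: eq_bigr => i _; apply: eq_bigr => x _.
  by rewrite cert_p_weight mulrC.
have pen_sum : \sum_i Pgam (fine gamma) (Sl i) (Su i) (unorm (cert_u i)) <=
    \sum_k y_rho k * (if k.2 then fine gamma else 0).
  rewrite !sum_pair; apply: ler_sum => i _; rewrite !big_bool /= !mulr0 !addr0.
  by have := (pen i).1; lra.
have := cert_TVw_le; under [X in _ <= X + _ + _]eq_bigr do rewrite mulr1.
rewrite C_eq; lra.
Qed.

End Certificate.

Lemma relaxed_le_flow_bound (v : R) :
  (forall ps p q r1 r2, dual_box e C gamma p q r1 r2 ->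
     (forall i x, divw w (q i) x - ps x + p i x = r1 i - r2 i) ->
     flow_obj Sl Su ps r1 r2 <= v) ->
  exists2 u, relaxed_feasible Sl Su gamma u &
    relaxed_energy w C u + \sum_i Pgam (fine gamma) (Sl i) (Su i) (unorm (u i)) <= v.
Proof.
move=> flow_le.
have rows_le x : (forall k, flow_row_form k x <= flow_row_bound k) -> flow_objective x <= v.
  by move=> /flow_rows_feasible_flow[dual_ok conservation]; apply: flow_le.
have [y [y_ge0 y_comb y_le]] := affine_farkas flow_row_form_linear flow_objective_linear
  (ex_intro _ trivial_flow trivial_flow_feasible) rows_le.
have [u_feas u_le] := cert_u_relaxed_le_bound y_ge0 y_comb.
by exists (cert_u y) => //; apply: le_trans u_le y_le.
Qed.

Lemma maxflow_value_finite : exists r : R, maxflow_value w e C Sl Su gamma = r%:E.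
Proof.
have [u u_feas] := exists_relaxed_feasible gamma Sl_le_Su sizes_V.
have := le_trans (maxflow_le_pd_inner e w C Sl Su gamma u)
                 (pd_inner_le_relaxed_obj C w_sym w_gt0 w_eq0 Sl_le_Su gamma_ge0 u_feas).
have [dual_ok conservation] := flow_rows_feasible_flow trivial_flow_feasible.
have : ((flow_objective trivial_flow)%:E <= maxflow_value w e C Sl Su gamma)%E.
  by apply: ereal_sup_ubound; do 5 eexists; split; [exact: dual_ok|exact: conservation|].
rewrite relaxed_objE //; case: (maxflow_value _ _ _ _ _ _) => [r _ _|//|//].
by exists r.
Qed.

Lemma relaxed_attains_maxflow : exists2 u, relaxed_feasible Sl Su gamma u &
  (relaxed_obj w C Sl Su gamma u <= maxflow_value w e C Sl Su gamma)%E.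
Proof.
have [r r_eq] := maxflow_value_finite.
have [|u u_feas u_le] := @relaxed_le_flow_bound r.
  move=> ps p q r1 r2 dual_ok conservation; rewrite -lee_fin -r_eq.
  by apply: ereal_sup_ubound; exists ps, p, q, r1, r2.
by exists u; rewrite // relaxed_objE // r_eq lee_fin.
Qed.

End FlowLP.

Lemma ereal_inf_sandwich (R : realType) (T : Type) (M : \bar R) (f g : T -> \bar R)
    (F : set T) (u0 : T) :
  (forall u, M <= f u)%E -> (forall u, F u -> f u <= g u)%E -> F u0 -> (g u0 <= M)%E ->
  [/\ M = ereal_inf [set f u | u in [set: T]], M = ereal_inf [set g u | u in F],
      f u0 = ereal_inf [set f u | u in [set: T]] & g u0 = ereal_inf [set g u | u in F]].
Proof.
move=> M_le_f f_le_g F_u0 g_u0_le.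
have f_u0 : f u0 = M.
  by apply/le_anti; rewrite M_le_f andbT (le_trans (f_le_g _ F_u0)).
have g_u0 : g u0 = M.
  by apply/le_anti; rewrite g_u0_le -f_u0 f_le_g.
have inf_f : ereal_inf [set f u | u in [set: T]] = M.
  apply/le_anti; rewrite -{1}f_u0 ereal_inf_lbound /=; last by exists u0.
  by apply: le_ereal_inf_tmp => _ [u _ <-].
have inf_g : ereal_inf [set g u | u in F] = M.
  apply/le_anti; rewrite -{1}g_u0 ereal_inf_lbound /=; last by exists u0.
  by apply: le_ereal_inf_tmp => _ [u F_u <-]; rewrite (le_trans (M_le_f u)) ?f_le_g.
by rewrite f_u0 g_u0 inf_f inf_g.
Qed.

Theorem theorem4 (R : realType) (V : finType) (e : rel V) (w : V -> V -> R)
  (n : nat) (C : 'I_n -> V -> R) (Sl Su : 'I_n -> nat) (gamma : \bar R) :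
  (forall x y, e x y = e y x) ->
  (forall x y, w x y = w y x) ->
  (forall x y, e x y -> 0 < w x y) ->
  (forall x y, ~~ e x y -> w x y = 0) ->
  (2 <= n)%N ->
  (forall i, (Sl i <= Su i)%N) ->
  (\sum_(i < n) Sl i <= #|V| <= \sum_(i < n) Su i)%N ->
  (0 <= gamma)%E ->
  [/\ maxflow_value w e C Sl Su gamma = primaldual_value w e C Sl Su gamma,
      primaldual_value w e C Sl Su gamma = relaxed_value w C Sl Su gamma,
      (exists u : 'I_n -> V -> R,
         pd_inner w e C Sl Su gamma u = primaldual_value w e C Sl Su gamma) &
      (exists u : 'I_n -> V -> R, relaxed_feasible Sl Su gamma u /\
         relaxed_obj w C Sl Su gamma u = relaxed_value w C Sl Su gamma)].
Proof.
move=> _ w_sym w_gt0 w_eq0 _ Sl_le_Su sizes_V gamma_ge0.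
have [u u_feas u_le] := relaxed_attains_maxflow C w_sym w_gt0 w_eq0 Sl_le_Su sizes_V gamma_ge0.
have [maxflow_pd maxflow_relaxed pd_u relaxed_u] :=
  ereal_inf_sandwich (maxflow_le_pd_inner e w C Sl Su gamma)
    (pd_inner_le_relaxed_obj C w_sym w_gt0 w_eq0 Sl_le_Su gamma_ge0) u_feas u_le.
split; [exact: maxflow_pd | exact: etrans (esym maxflow_pd) maxflow_relaxed |
       by exists u | by exists u].
Qed.
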